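(* Let $u(x,t)$ and $\Phi_n=(\varphi_1,\ldots,\varphi_n)$ be a (smooth) solution of the KdV equation with self-consistent sources of degree $n$, $$u_t+6uu_x+u_{xxx}+4\sum_{j=1}^n\varphi_j\varphi_{j,x}=0,\qquad \varphi_{j,xx}+(\lambda_j+u)\varphi_j=0,\ j=1,\ldots,n,$$ with distinct real constants $\lambda_1,\ldots,\lambda_n$. Let $\xi\notin\{\lambda_1,\ldots,\lambda_n\}$ and let $f$ be a solution of the Lax system $$\phi_{xx}+(\lambda+u)\phi=0,\qquad \phi_t=A_n(\lambda,u,\Phi_n)\phi$$ with $\lambda=\xi$ (belonging to a family $f(x,t;\xi)$ of such solutions depending smoothly on $\xi$, so that $\omega(f,f)$ below is defined). Let $\lambda\neq\xi$ and let $\phi$ be a solution of the same Lax system with spectral parameter $\lambda$. Let $e(t)$ be an arbitrary differentiable function of $t$ and define $$\bar\phi=\phi-\frac{f\,\omega(f,\phi)}{e(t)+\omega(f,f)},\qquad \bar u=u+2\partial_x^2\ln[e(t)+\omega(f,f)],\qquad \bar\varphi_j=\varphi_j-\frac{f\,\omega(f,\varphi_j)}{e(t)+\omega(f,f)},\ j=1,\ldots,n,$$ and $\bar\Phi_n=(\bar\varphi_1,\ldots,\bar\varphi_n)$. Then $$\phi_t-\frac{f_t\,\omega(f,\phi)}{e(t)+\omega(f,f)}+\frac{f\,\partial_t\omega(f,f)}{[e(t)+\omega(f,f)]^2}\,\omega(f,\phi)-\frac{f\,\partial_t\omega(f,\phi)}{e(t)+\omega(f,f)}=A_n(\lambda,\bar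 u,\bar\Phi_n)\bar\phi .$$ (For constant $e(t)\equiv C$ the left-hand side equals $\bar\phi_t$.)
   Context: All functions are functions of $(x,t)$. $W(g,h)=g h_x-g_x h$ denotes the Wronskian. For a spectral parameter $\lambda$ and $\Phi_n=(\varphi_1,\ldots,\varphi_n)$ with $\varphi_j$ associated to $\lambda_j$, the operator $A_n$ is $$A_n(\lambda,u,\Phi_n)\phi=u_x\phi+(4\lambda-2u)\phi_x+\sum_{j=1}^n\frac{\varphi_j}{\lambda_j-\lambda}W(\varphi_j,\phi).$$ If $f$ solves $f_{xx}+(\xi+u)f=0$ and $g$ solves $g_{xx}+(\eta+u)g=0$ with $\eta\neq\xi$, then $\omega(f,g)=\dfrac{W(f,g)}{\xi-\eta}$ (in particular $\omega(f,\phi)=W(f,\phi)/(\xi-\lambda)$ and $\omega(f,\varphi_j)=W(f,\varphi_j)/(\xi-\lambda_j)$). If $f=f(x,t;\xi)$ depends smoothly on $\xi$, then $\omega(f,f)=\lim_{\eta\to\xi}\frac{W(f(\xi),f(\eta))}{\xi-\eta}=-W(f,\partial_\xi f)$; it satisfies $\partial_x\omega(f,f)=f^2$. *)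

From Stdlib Require Import Reals List.
From Coquelicot Require Import Coquelicot.
Open Scope R_scope.

Definition dx (g : R -> R -> R) : R -> R -> R :=
  fun x t => Derive (fun y => g y t) x.
Definition dt (g : R -> R -> R) : R -> R -> R :=
  fun x t => Derive (fun s => g x s) t.

Fixpoint pder2 (ds : list bool) (g : R -> R -> R) : R -> R -> R :=
  match ds with
  | nil => g
  | b :: ds' => if b then dx (pder2 ds' g) else dt (pder2 ds' g)
  end.

Definition smooth2 (g : R -> R -> R) : Prop :=
  forall ds x t,
    ex_derive (fun y => pder2 ds g y t) x /\
    ex_derive (fun s => pder2 ds g x s) t /\
    continuous (fun p : R * R => pder2 ds g (fst p) (snd p)) (x, t).

Inductive dir3 := Dx3 | Dt3 | Dxi3.

Fixpoint pder3 (ds : list dir3) (G : R -> R -> R -> R) : R -> R -> R -> R :=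
  match ds with
  | nil => G
  | d :: ds' =>
      let H := pder3 ds' G in
      match d with
      | Dx3 => fun x t e => Derive (fun y => H y t e) x
      | Dt3 => fun x t e => Derive (fun s => H x s e) t
      | Dxi3 => fun x t e => Derive (fun z => H x t z) e
      end
  end.

Definition smooth3_near (G : R -> R -> R -> R) (xi0 delta : R) : Prop :=
  forall ds x t eta, Rabs (eta - xi0) < delta ->
    ex_derive (fun y => pder3 ds G y t eta) x /\
    ex_derive (fun s => pder3 ds G x s eta) t /\
    ex_derive (fun z => pder3 ds G x t z) eta /\
    continuous (fun p : R * R * R => pder3 ds G (fst (fst p)) (snd (fst p)) (snd p))
      (x, t, eta).

Fixpoint sumR (n : nat) (g : nat -> R) : R :=
  match n with
  | O => 0
  | S k => sumR k g + g k
  end.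

Definition W (g h : R -> R -> R) : R -> R -> R :=
  fun x t => g x t * dx h x t - dx g x t * h x t.

Definition An (n : nat) (lam : R) (u : R -> R -> R) (phis : nat -> R -> R -> R)
  (lams : nat -> R) (psi : R -> R -> R) : R -> R -> R :=
  fun x t => dx u x t * psi x t + (4 * lam - 2 * u x t) * dx psi x t
    + sumR n (fun j => phis j x t / (lams j - lam) * W (phis j) psi x t).

Definition LaxSol (n : nat) (u : R -> R -> R) (phis : nat -> R -> R -> R)
  (lams : nat -> R) (lam : R) (psi : R -> R -> R) : Prop :=
  forall x t, dx (dx psi) x t + (lam + u x t) * psi x t = 0 /\
              dt psi x t = An n lam u phis lams psi x t.

Definition omega_ff (F : R -> R -> R -> R) (xi : R) : R -> R -> R :=
  fun x t => - W (fun y s => F y s xi) (fun y s => Derive (fun z => F y s z) xi) x t.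

From Stdlib Require Import Reals List Lra.
From Coquelicot Require Import Coquelicot.
Open Scope R_scope.

(* Write h = d_xi f.  The x-equations give d_x W(f,g) = (xi - mu) f g for g solving the
   Schroedinger equation at mu, and d_x omega(f,f) = f^2 since h_xx = -f - (xi + u) h.
   Hence the binary Darboux transforms g - f omega(f,g) / D, with D = e + omega(f,f),
   satisfy omega(gbar_1, gbar_2) = omega(g_1, g_2) - omega(f,g_1) omega(f,g_2) / D,
   which rewrites the sources of A_n(lam, ubar, Phibar_n) phibar.  The left-hand side is
   linear in the t-derivatives of phi, f, h and of their x-derivatives; the Lax flows of
   phi and f and the xi-derivative of the flow of f express all of them pointwise.  Both
   sides then become rational in the values at (x, t), and the resulting identity splits
   into one source-free identity and one identity per source. *)

Lemma sumR_ext n (a b : nat -> R) :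
  (forall j, (j < n)%nat -> a j = b j) -> sumR n a = sumR n b.
Proof.
  induction n as [|n IH]; intros Hab; simpl; [reflexivity|].
  rewrite IH, Hab; auto with arith.
Qed.

Lemma sumR_plus n (a b : nat -> R) :
  sumR n (fun j => a j + b j) = sumR n a + sumR n b.
Proof. induction n as [|n IH]; simpl; [ring|rewrite IH; ring]. Qed.

Lemma is_derive_sumR n (g : nat -> R -> R) (dg : nat -> R) x :
  (forall j, (j < n)%nat -> is_derive (g j) x (dg j)) ->
  is_derive (fun y => sumR n (fun j => g j y)) x (sumR n dg).
Proof.
  induction n as [|n IH]; intros Hg; simpl.
  - apply (is_derive_const 0).
  - apply (is_derive_plus (fun y => sumR n (fun j => g j y)) (g n)); auto with arith.
Qed.

Lemma is_derive_eq (g : R -> R) x l l' : is_derive g x l -> l = l' -> is_derive g x l'.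
Proof. now intros H <-. Qed.

Lemma eq_by_increments (a b : nat -> R) (P : nat -> Prop) n :
  a O = b O ->
  (forall k, P k -> a (S k) - b (S k) = a k - b k) ->
  (forall k, (k < n)%nat -> P k) -> a n = b n.
Proof.
  intros H0 HS; induction n as [|n IH]; intros HP; [exact H0|].
  apply Rminus_diag_uniq; rewrite HS by auto with arith.
  apply Rminus_diag_eq, IH; auto with arith.
Qed.

Lemma pder2_dx ds g : pder2 ds (dx g) = pder2 (ds ++ true :: nil) g.
Proof. induction ds as [|b ds IH]; simpl; [reflexivity|now rewrite IH]. Qed.

Lemma smooth2_dx g : smooth2 g -> smooth2 (dx g).
Proof. intros Hg ds; rewrite pder2_dx; apply Hg. Qed.

Lemma smooth2_ex_derive_x g x t : smooth2 g -> ex_derive (fun y => g y t) x.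
Proof. intros Hg; exact (proj1 (Hg nil x t)). Qed.

Lemma smooth2_ex_derive_t g x t : smooth2 g -> ex_derive (fun s => g x s) t.
Proof. intros Hg; exact (proj1 (proj2 (Hg nil x t))). Qed.

Lemma smooth2_dt_dx g x t : smooth2 g -> dt (dx g) x t = dx (dt g) x t.
Proof.
  intros Hg; symmetry; apply (Schwarz g x t).
  - exists (mkposreal 1 Rlt_0_1); intros y s _ _.
    split; [|split; [|split]].
    + exact (proj1 (Hg nil y s)).
    + exact (proj1 (proj2 (Hg nil y s))).
    + exact (proj1 (Hg (false :: nil) y s)).
    + exact (proj1 (proj2 (Hg (true :: nil) y s))).
  - apply continuity_2d_pt_filterlim; exact (proj2 (proj2 (Hg (true :: false :: nil) x t))).
  - apply continuity_2d_pt_filterlim; exact (proj2 (proj2 (Hg (false :: true :: nil) x t))).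
Qed.

#[local] Hint Resolve smooth2_dx : smooth.

Ltac ex_derive_smooth :=
  repeat match goal with |- _ /\ _ => split | |- True => exact I end;
  try solve [match goal with
    | |- ex_derive (fun y => ?g y ?t) ?x => apply (smooth2_ex_derive_x g x t)
    | |- ex_derive (fun s => ?g ?x s) ?t => apply (smooth2_ex_derive_t g x t)
    end; auto with smooth].

Lemma Derive_dx (g : R -> R -> R) x t : Derive (fun y => g y t) x = dx g x t.
Proof. reflexivity. Qed.

Lemma Derive_dt (g : R -> R -> R) x t : Derive (fun s => g x s) t = dt g x t.
Proof. reflexivity. Qed.

Lemma continuous_pair (a b : R * R -> R) p :
  continuous a p -> continuous b p -> continuous (fun q => (a q, b q)) p.
Proof.
  intros Ha Hb; apply (continuous_comp_2 a b pair); [exact Ha | exact Hb |].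
  apply (continuous_ext (fun q => q)); [intros [y s]; reflexivity | apply continuous_id].
Qed.

Lemma continuous_restrict3 (G : R -> R -> R -> R) (a b c : R * R -> R) p :
  continuous a p -> continuous b p -> continuous c p ->
  continuous (fun q : R * R * R => G (fst (fst q)) (snd (fst q)) (snd q)) (a p, b p, c p) ->
  continuous (fun q => G (a q) (b q) (c q)) p.
Proof.
  intros Ha Hb Hc HG.
  apply (continuous_comp_2 (fun q => (a q, b q)) c (fun ab z => G (fst ab) (snd ab) z));
    [apply continuous_pair | |]; assumption.
Qed.

Section SmoothFamily.

Variables (F : R -> R -> R -> R) (xi delta : R).
Hypothesis HF : smooth3_near F xi delta.

Lemma pder2_slice ds ds0 eta :
  pder2 ds (fun x t => pder3 ds0 F x t eta)
  = fun x t => pder3 (map (fun b : bool => if b then Dx3 else Dt3) ds ++ ds0) F x t eta.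
Proof. induction ds as [|[|] ds IH]; simpl; [reflexivity| |]; now rewrite IH. Qed.

Lemma smooth3_near_slice ds0 eta :
  Rabs (eta - xi) < delta -> smooth2 (fun x t => pder3 ds0 F x t eta).
Proof.
  intros Heta ds x t; rewrite pder2_slice.
  destruct (HF (map (fun b : bool => if b then Dx3 else Dt3) ds ++ ds0) x t eta Heta)
    as (Hx & Ht & _ & Hc).
  split; [exact Hx | split; [exact Ht |]].
  apply (continuous_restrict3 _ fst snd (fun _ => eta));
    [apply continuous_fst | apply continuous_snd | apply continuous_const | exact Hc].
Qed.

Lemma locally_2d_near (P : R -> R -> Prop) x eta :
  Rabs (eta - xi) < delta ->
  (forall y z, Rabs (z - xi) < delta -> P y z) -> locally_2d P x eta.
Proof.
  intros Heta HP.
  assert (Hr : 0 < delta - Rabs (eta - xi)) by lra.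
  exists (mkposreal _ Hr); intros y z _ Hz; simpl in Hz; apply HP.
  replace (z - xi) with ((z - eta) + (eta - xi)) by ring.
  pose proof (Rabs_triang (z - eta) (eta - xi)); lra.
Qed.

Lemma smooth3_near_continuity_x ds x t eta :
  Rabs (eta - xi) < delta -> continuity_2d_pt (fun y z => pder3 ds F y t z) x eta.
Proof.
  intros Heta; apply continuity_2d_pt_filterlim.
  apply (continuous_restrict3 (pder3 ds F) fst (fun _ => t) snd (x, eta));
    [apply continuous_fst | apply continuous_const | apply continuous_snd
    | exact (proj2 (proj2 (proj2 (HF ds x t eta Heta))))].
Qed.

Lemma smooth3_near_continuity_t ds x t eta :
  Rabs (eta - xi) < delta -> continuity_2d_pt (fun s z => pder3 ds F x s z) t eta.
Proof.
  intros Heta; apply continuity_2d_pt_filterlim.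
  apply (continuous_restrict3 (pder3 ds F) (fun _ => x) fst snd (t, eta));
    [apply continuous_const | apply continuous_fst | apply continuous_snd
    | exact (proj2 (proj2 (proj2 (HF ds x t eta Heta))))].
Qed.

Lemma pder3_Dxi_Dx ds x t eta :
  Rabs (eta - xi) < delta ->
  pder3 (Dxi3 :: Dx3 :: ds) F x t eta = pder3 (Dx3 :: Dxi3 :: ds) F x t eta.
Proof.
  intros Heta; symmetry; apply (Schwarz (fun y z => pder3 ds F y t z) x eta).
  - apply locally_2d_near; [exact Heta|]; intros y z Hz.
    split; [|split; [|split]].
    + exact (proj1 (HF ds y t z Hz)).
    + exact (proj1 (proj2 (proj2 (HF ds y t z Hz)))).
    + exact (proj1 (HF (Dxi3 :: ds) y t z Hz)).
    + exact (proj1 (proj2 (proj2 (HF (Dx3 :: ds) y t z Hz)))).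
  - exact (smooth3_near_continuity_x (Dx3 :: Dxi3 :: ds) x t eta Heta).
  - exact (smooth3_near_continuity_x (Dxi3 :: Dx3 :: ds) x t eta Heta).
Qed.

Lemma pder3_Dxi_Dt ds x t eta :
  Rabs (eta - xi) < delta ->
  pder3 (Dxi3 :: Dt3 :: ds) F x t eta = pder3 (Dt3 :: Dxi3 :: ds) F x t eta.
Proof.
  intros Heta; symmetry; apply (Schwarz (fun s z => pder3 ds F x s z) t eta).
  - apply locally_2d_near; [exact Heta|]; intros s z Hz.
    split; [|split; [|split]].
    + exact (proj1 (proj2 (HF ds x s z Hz))).
    + exact (proj1 (proj2 (proj2 (HF ds x s z Hz)))).
    + exact (proj1 (proj2 (HF (Dxi3 :: ds) x s z Hz))).
    + exact (proj1 (proj2 (proj2 (HF (Dt3 :: ds) x s z Hz)))).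
  - exact (smooth3_near_continuity_t (Dt3 :: Dxi3 :: ds) x t eta Heta).
  - exact (smooth3_near_continuity_t (Dxi3 :: Dt3 :: ds) x t eta Heta).
Qed.

End SmoothFamily.

Definition schrodinger (u : R -> R -> R) (mu : R) (g : R -> R -> R) : Prop :=
  forall x t, dx (dx g) x t + (mu + u x t) * g x t = 0.

Lemma schrodinger_dx_dx u mu g x t :
  schrodinger u mu g -> dx (dx g) x t = - (mu + u x t) * g x t.
Proof. intros Hg; specialize (Hg x t); lra. Qed.

Lemma is_derive_W g k x t : smooth2 g -> smooth2 k ->
  is_derive (fun y => W g k y t) x (g x t * dx (dx k) x t - dx (dx g) x t * k x t).
Proof.
  intros Hg Hk; unfold W; auto_derive; [ex_derive_smooth|].
  rewrite !Derive_dx; ring.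
Qed.

Lemma dx_W g k x t : smooth2 g -> smooth2 k ->
  dx (W g k) x t = g x t * dx (dx k) x t - dx (dx g) x t * k x t.
Proof. intros Hg Hk; exact (is_derive_unique _ _ _ (is_derive_W g k x t Hg Hk)). Qed.

Lemma dx_W_schrodinger u a b g k x t :
  smooth2 g -> smooth2 k -> schrodinger u a g -> schrodinger u b k ->
  dx (W g k) x t = (a - b) * g x t * k x t.
Proof.
  intros Hg Hk Hga Hkb; rewrite dx_W, (schrodinger_dx_dx u a g), (schrodinger_dx_dx u b k)
    by assumption; ring.
Qed.

Lemma dt_W g k x t : smooth2 g -> smooth2 k ->
  dt (W g k) x t = dt g x t * dx k x t + g x t * dt (dx k) x t
                   - dt (dx g) x t * k x t - dx g x t * dt k x t.
Proof.
  intros Hg Hk; apply is_derive_unique; unfold W; auto_derive; [ex_derive_smooth|].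
  rewrite !Derive_dt; ring.
Qed.

Lemma dt_W_ratio g k c x t : smooth2 g -> smooth2 k ->
  dt (fun y s => W g k y s / c) x t
  = (dt g x t * dx k x t + g x t * dt (dx k) x t - dt (dx g) x t * k x t - dx g x t * dt k x t) / c.
Proof.
  intros Hg Hk; change (Derive (fun s => W g k x s / c) t = (dt g x t * dx k x t
    + g x t * dt (dx k) x t - dt (dx g) x t * k x t - dx g x t * dt k x t) / c).
  unfold Rdiv; rewrite Derive_scal_l, Derive_dt, dt_W by assumption; reflexivity.
Qed.

Definition source_sum (n : nat) (phis : nat -> R -> R -> R) (c : nat -> R)
  (g : R -> R -> R) : R -> R -> R :=
  fun x t => sumR n (fun j => phis j x t / c j * W (phis j) g x t).

Section Lax.

Variables (n : nat) (u : R -> R -> R) (phis : nat -> R -> R -> R) (lams : nat -> R).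
Hypothesis Hu : smooth2 u.
Hypothesis Hphis : forall j, (j < n)%nat -> smooth2 (phis j).
Hypothesis Hphis_schr : forall j, (j < n)%nat -> schrodinger u (lams j) (phis j).

Lemma is_derive_source_sum c g x t :
  smooth2 g ->
  is_derive (fun y => source_sum n phis c g y t) x
    (sumR n (fun j => dx (phis j) x t / c j * W (phis j) g x t
       + phis j x t / c j * (phis j x t * dx (dx g) x t + (lams j + u x t) * phis j x t * g x t))).
Proof.
  intros Hg; apply (is_derive_sumR n (fun j y => phis j y t / c j * W (phis j) g y t)).
  intros j Hj; unfold W; auto_derive; [ex_derive_smooth|].
  rewrite !Derive_dx, (schrodinger_dx_dx u (lams j) (phis j)) by auto.
  unfold Rdiv; ring.
Qed.

Lemma dx_source_sum c g x t :
  smooth2 g ->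
  dx (source_sum n phis c g) x t
  = sumR n (fun j => dx (phis j) x t / c j * W (phis j) g x t
       + phis j x t / c j * (phis j x t * dx (dx g) x t + (lams j + u x t) * phis j x t * g x t)).
Proof. intros Hg; exact (is_derive_unique _ _ _ (is_derive_source_sum c g x t Hg)). Qed.

Lemma is_derive_An mu psi x t :
  smooth2 psi ->
  is_derive (fun y => An n mu u phis lams psi y t) x
    (dx (dx u) x t * psi x t - dx u x t * dx psi x t + (4 * mu - 2 * u x t) * dx (dx psi) x t
     + dx (source_sum n phis (fun j => lams j - mu) psi) x t).
Proof.
  intros Hpsi.
  change (is_derive (fun y => dx u y t * psi y t + (4 * mu - 2 * u y t) * dx psi y t
                              + source_sum n phis (fun j => lams j - mu) psi y t) x
    (dx (dx u) x t * psi x t - dx u x t * dx psi x t + (4 * mu - 2 * u x t) * dx (dx psi) x t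
     + dx (source_sum n phis (fun j => lams j - mu) psi) x t)).
  auto_derive.
  - repeat match goal with |- _ /\ _ => split | |- True => exact I end;
      [ex_derive_smooth .. | eexists; apply is_derive_source_sum, Hpsi].
  - rewrite !Derive_dx; ring.
Qed.

Lemma dx_An mu psi x t :
  smooth2 psi ->
  dx (An n mu u phis lams psi) x t
  = dx (dx u) x t * psi x t - dx u x t * dx psi x t + (4 * mu - 2 * u x t) * dx (dx psi) x t
    + dx (source_sum n phis (fun j => lams j - mu) psi) x t.
Proof. intros Hpsi; exact (is_derive_unique _ _ _ (is_derive_An mu psi x t Hpsi)). Qed.

Lemma LaxSol_dt_dx mu psi x t :
  smooth2 psi -> LaxSol n u phis lams mu psi ->
  dt (dx psi) x t = dx (An n mu u phis lams psi) x t.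
Proof.
  intros Hpsi Hlax; rewrite smooth2_dt_dx by exact Hpsi.
  apply Derive_ext; intros y; exact (proj2 (Hlax y t)).
Qed.

End Lax.

Lemma is_derive_ln_abs (g : R -> R) x d :
  is_derive g x d -> g x <> 0 -> is_derive (fun y => ln (Rabs (g y))) x (d / g x).
Proof.
  intros Hd Hg.
  eapply is_derive_eq.
  - apply (is_derive_comp ln (fun y => Rabs (g y))).
    + apply is_derive_ln, Rabs_pos_lt, Hg.
    + apply is_derive_Rabs; [exact Hd | exact Hg].
  - unfold scal; simpl; unfold mult; simpl.
    destruct (Rlt_or_le 0 (g x)) as [Hpos | Hneg].
    + rewrite sign_eq_1, Rabs_pos_eq by lra; field; exact Hg.
    + assert (g x < 0) by (destruct Hneg; [assumption | contradiction]).
      rewrite sign_eq_m1, Rabs_left by assumption; field; exact Hg.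
Qed.

Definition darboux (f D : R -> R -> R) (xi mu : R) (g : R -> R -> R) : R -> R -> R :=
  fun x t => g x t - f x t * (W f g x t / (xi - mu)) / D x t.

Section Darboux.

Variables (u f D : R -> R -> R) (xi : R).
Hypothesis Hu : smooth2 u.
Hypothesis Hf : smooth2 f.
Hypothesis Hf_schr : schrodinger u xi f.
Hypothesis HDx : forall x t, is_derive (fun y => D y t) x (f x t ^ 2).
Hypothesis HD0 : forall x t, D x t <> 0.

Ltac D_side :=
  match goal with
  | |- ex_derive (fun y => D y _) _ => eexists; apply HDx
  | |- D _ _ <> 0 => apply HD0
  | |- _ * _ <> 0 => apply Rmult_integral_contrapositive_currified; D_side
  | |- 1 <> 0 => exact R1_neq_R0
  end.

Lemma dx_D x t : dx D x t = f x t ^ 2.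
Proof. exact (is_derive_unique _ _ _ (HDx x t)). Qed.

Lemma dx_darboux mu g x t :
  smooth2 g -> schrodinger u mu g -> xi <> mu ->
  dx (darboux f D xi mu g) x t
  = dx g x t - (dx f x t * (W f g x t / (xi - mu)) + f x t ^ 2 * g x t) / D x t
    + f x t ^ 3 * (W f g x t / (xi - mu)) / D x t ^ 2.
Proof.
  intros Hg Hg_schr Hmu; apply is_derive_unique; unfold darboux.
  auto_derive.
  - ex_derive_smooth.
    + eexists; apply is_derive_W; assumption.
    + eexists; apply HDx.
    + apply HD0.
  - rewrite !Derive_dx, dx_D, (dx_W_schrodinger u xi mu) by assumption.
    field; split; first [apply HD0 | lra].
Qed.

Lemma W_darboux mu1 g1 mu2 g2 x t :
  smooth2 g1 -> schrodinger u mu1 g1 -> xi <> mu1 ->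
  smooth2 g2 -> schrodinger u mu2 g2 -> xi <> mu2 ->
  W (darboux f D xi mu1 g1) (darboux f D xi mu2 g2) x t
  = W g1 g2 x t - (mu1 - mu2) * (W f g1 x t / (xi - mu1)) * (W f g2 x t / (xi - mu2)) / D x t.
Proof.
  intros Hg1 Hg1_schr Hmu1 Hg2 Hg2_schr Hmu2; unfold W at 1.
  rewrite !dx_darboux by assumption; unfold darboux, W.
  field; repeat split; first [apply HD0 | lra].
Qed.

Lemma An_darboux n phis lams lam phi ub x t :
  (forall j, (j < n)%nat -> smooth2 (phis j)) ->
  (forall j, (j < n)%nat -> schrodinger u (lams j) (phis j)) ->
  (forall j, (j < n)%nat -> xi <> lams j) ->
  (forall j, (j < n)%nat -> lam <> lams j) ->
  smooth2 phi -> schrodinger u lam phi -> xi <> lam ->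
  An n lam ub (fun j => darboux f D xi (lams j) (phis j)) lams (darboux f D xi lam phi) x t
  = dx ub x t * darboux f D xi lam phi x t
    + (4 * lam - 2 * ub x t) * dx (darboux f D xi lam phi) x t
    + sumR n (fun j => darboux f D xi (lams j) (phis j) x t
        * (W (phis j) phi x t / (lams j - lam)
           - W f (phis j) x t / (xi - lams j) * (W f phi x t / (xi - lam)) / D x t)).
Proof.
  intros Hphis Hphis_schr Hxi Hlam Hphi Hphi_schr Hxi_lam; unfold An; f_equal.
  apply sumR_ext; intros j Hj.
  rewrite W_darboux by auto.
  specialize (Hlam j Hj); specialize (Hxi j Hj).
  field; repeat split; first [apply HD0 | lra].
Qed.

Local Notation logD := (fun y s => ln (Rabs (D y s))).

Lemma dx_log_D x t : dx logD x t = f x t ^ 2 / D x t.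
Proof. exact (is_derive_unique _ _ _ (is_derive_ln_abs _ x _ (HDx x t) (HD0 x t))). Qed.

Lemma is_derive_dx_log_D x t :
  is_derive (fun y => dx logD y t) x (2 * f x t * dx f x t / D x t - f x t ^ 4 / D x t ^ 2).
Proof.
  apply (is_derive_ext (fun y => f y t ^ 2 / D y t)); [intros y; symmetry; apply dx_log_D|].
  auto_derive; ex_derive_smooth; try D_side.
  rewrite !Derive_dx, dx_D; field; apply HD0.
Qed.

Lemma dx_dx_log_D x t :
  dx (dx logD) x t = 2 * f x t * dx f x t / D x t - f x t ^ 4 / D x t ^ 2.
Proof. exact (is_derive_unique _ _ _ (is_derive_dx_log_D x t)). Qed.

Lemma is_derive_dx_dx_log_D x t :
  is_derive (fun y => dx (dx logD) y t) x
    (2 * (dx f x t ^ 2 + f x t * dx (dx f) x t) / D x t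
     - 6 * f x t ^ 3 * dx f x t / D x t ^ 2 + 2 * f x t ^ 6 / D x t ^ 3).
Proof.
  apply (is_derive_ext (fun y => 2 * f y t * dx f y t / D y t - f y t ^ 4 / D y t ^ 2));
    [intros y; symmetry; apply dx_dx_log_D|].
  auto_derive; ex_derive_smooth; try D_side.
  rewrite !Derive_dx, dx_D; field; apply HD0.
Qed.

Lemma dx_darboux_potential x t :
  dx (fun y s => u y s + 2 * dx (dx logD) y s) x t
  = dx u x t + 2 * (2 * (dx f x t ^ 2 + f x t * dx (dx f) x t) / D x t
     - 6 * f x t ^ 3 * dx f x t / D x t ^ 2 + 2 * f x t ^ 6 / D x t ^ 3).
Proof.
  apply is_derive_unique; auto_derive; ex_derive_smooth;
    [eexists; apply is_derive_dx_dx_log_D |].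
  rewrite (is_derive_unique (fun y : R => dx (dx logD) y t) x _ (is_derive_dx_dx_log_D x t)).
  rewrite Derive_dx; ring.
Qed.

End Darboux.

Section KdVSources.

Variables (n : nat) (u : R -> R -> R) (phis : nat -> R -> R -> R) (lams : nat -> R)
  (F : R -> R -> R -> R) (xi delta lam : R) (phi : R -> R -> R) (e : R -> R).
Hypothesis Hu : smooth2 u.
Hypothesis Hphis : forall j, (j < n)%nat -> smooth2 (phis j).
Hypothesis Hphis_schr : forall j, (j < n)%nat -> schrodinger u (lams j) (phis j).
Hypothesis Hxi : forall j, (j < n)%nat -> xi <> lams j.
Hypothesis Hdelta : 0 < delta.
Hypothesis HF : smooth3_near F xi delta.
Hypothesis HF_lax :
  forall eta, Rabs (eta - xi) < delta -> LaxSol n u phis lams eta (fun x t => F x t eta).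
Hypothesis Hlam_xi : lam <> xi.
Hypothesis Hlam : forall j, (j < n)%nat -> lam <> lams j.
Hypothesis Hphi : smooth2 phi.
Hypothesis Hphi_lax : LaxSol n u phis lams lam phi.
Hypothesis HD0 : forall x t, e t + omega_ff F xi x t <> 0.

Let f := fun x t => F x t xi.
Let h := fun x t => Derive (fun z => F x t z) xi.
Let D := fun x t => e t + omega_ff F xi x t.

Lemma xi_near : Rabs (xi - xi) < delta.
Proof. rewrite Rminus_diag, Rabs_R0; exact Hdelta. Qed.

Lemma locally_near (P : R -> Prop) :
  (forall z, Rabs (z - xi) < delta -> P z) -> locally xi P.
Proof. intros HP; exists (mkposreal delta Hdelta); intros z Hz; apply HP, Hz. Qed.

Lemma f_smooth : smooth2 f.
Proof. exact (smooth3_near_slice F xi delta HF nil xi xi_near). Qed.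

Lemma h_smooth : smooth2 h.
Proof. exact (smooth3_near_slice F xi delta HF (Dxi3 :: nil) xi xi_near). Qed.

Lemma f_lax : LaxSol n u phis lams xi f.
Proof. exact (HF_lax xi xi_near). Qed.

Lemma ex_derive_xi ds x t : ex_derive (fun z => pder3 ds F x t z) xi.
Proof. exact (proj1 (proj2 (proj2 (HF ds x t xi xi_near)))). Qed.

Lemma Derive_xi_dx x t : Derive (fun z => Derive (fun y => F y t z) x) xi = dx h x t.
Proof. exact (pder3_Dxi_Dx F xi delta HF nil x t xi xi_near). Qed.

Lemma h_schrodinger x t : dx (dx h) x t = - f x t - (xi + u x t) * h x t.
Proof.
  change (dx (dx h) x t) with (Derive (fun y => dx h y t) x).
  rewrite (Derive_ext _ (fun y => pder3 (Dxi3 :: Dx3 :: nil) F y t xi))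
    by (intros y; symmetry; exact (Derive_xi_dx y t)).
  change (pder3 (Dx3 :: Dxi3 :: Dx3 :: nil) F x t xi = - f x t - (xi + u x t) * h x t).
  rewrite <- (pder3_Dxi_Dx F xi delta HF (Dx3 :: nil)) by exact xi_near; simpl.
  rewrite (Derive_ext_loc _ (fun z => - (z + u x t) * F x t z)).
  - apply is_derive_unique; auto_derive;
      [apply (ex_derive_xi nil) | unfold f, h; ring].
  - apply locally_near; intros z Hz.
    exact (schrodinger_dx_dx u z (fun y s => F y s z) x t (fun y s => proj1 (HF_lax z Hz y s))).
Qed.

Lemma is_derive_omega_ff x t : is_derive (fun y => omega_ff F xi y t) x (f x t ^ 2).
Proof.
  change (is_derive (fun y => - W f h y t) x (f x t ^ 2)).
  auto_derive; [eexists; apply is_derive_W; [exact f_smooth | exact h_smooth]|].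
  rewrite Derive_dx, dx_W, h_schrodinger, (schrodinger_dx_dx u xi f)
    by first [exact f_smooth | exact h_smooth | exact (fun y s => proj1 (f_lax y s))].
  ring.
Qed.

Lemma is_derive_D x t : is_derive (fun y => D y t) x (f x t ^ 2).
Proof.
  eapply is_derive_eq;
    [apply (is_derive_plus (fun _ => e t)); [apply is_derive_const | apply is_derive_omega_ff]|].
  unfold plus, zero; simpl; ring.
Qed.

Lemma dt_omega_ff x t :
  dt (omega_ff F xi) x t
  = - (dt f x t * dx h x t + f x t * dt (dx h) x t - dt (dx f) x t * h x t - dx f x t * dt h x t).
Proof.
  change (Derive (fun s => - W f h x s) t = - (dt f x t * dx h x t + f x t * dt (dx h) x t
                                             - dt (dx f) x t * h x t - dx f x t * dt h x t)).
  rewrite Derive_opp, Derive_dt, dt_W by (exact f_smooth || exact h_smooth); reflexivity.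
Qed.

Lemma dt_h x t :
  dt h x t = An n xi u phis lams h x t + 4 * dx f x t
             + source_sum n phis (fun j => (lams j - xi) ^ 2) f x t.
Proof.
  change (dt h x t) with (pder3 (Dt3 :: Dxi3 :: nil) F x t xi).
  rewrite <- (pder3_Dxi_Dt F xi delta HF nil) by exact xi_near.
  change (Derive (fun z => dt (fun y s => F y s z) x t) xi = An n xi u phis lams h x t
            + 4 * dx f x t + source_sum n phis (fun j => (lams j - xi) ^ 2) f x t).
  rewrite (Derive_ext_loc _ (fun z => An n z u phis lams (fun y s => F y s z) x t))
    by (apply locally_near; intros z Hz; exact (proj2 (HF_lax z Hz x t))).
  apply is_derive_unique; eapply is_derive_eq.
  { apply (is_derive_plus
      (fun z => dx u x t * F x t z + (4 * z - 2 * u x t) * pder3 (Dx3 :: nil) F x t z)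
      (fun z => sumR n (fun j => phis j x t / (lams j - z)
                   * (phis j x t * pder3 (Dx3 :: nil) F x t z - dx (phis j) x t * F x t z)))
      xi (dx u x t * h x t + 4 * dx f x t + (4 * xi - 2 * u x t) * dx h x t)
      (sumR n (fun j => phis j x t / (lams j - xi) * W (phis j) h x t
                        + phis j x t / (lams j - xi) ^ 2 * W (phis j) f x t))).
    - auto_derive.
      + split; [apply (ex_derive_xi nil) | split; [apply (ex_derive_xi (Dx3 :: nil)) | exact I]].
      + rewrite Derive_xi_dx.
        change (Derive (fun z => F x t z) xi) with (h x t).
        change (Derive (fun y => F y t xi) x) with (dx f x t); ring.
    - apply (is_derive_sumR n (fun j z => phis j x t / (lams j - z)
                   * (phis j x t * pder3 (Dx3 :: nil) F x t z - dx (phis j) x t * F x t z))).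
      intros j Hj; specialize (Hxi j Hj); auto_derive.
      + split; [lra | split; [apply (ex_derive_xi (Dx3 :: nil)) |
                             split; [apply (ex_derive_xi nil) | exact I]]].
      + rewrite Derive_xi_dx.
        change (Derive (fun z => F x t z) xi) with (h x t).
        change (Derive (fun y => F y t xi) x) with (dx f x t).
        change (F x t xi) with (f x t); unfold W; field; lra. }
  unfold plus; simpl; rewrite sumR_plus; unfold An, source_sum; ring.
Qed.

Lemma dt_dx_h x t :
  dt (dx h) x t = dx (An n xi u phis lams h) x t + 4 * dx (dx f) x t
                  + dx (source_sum n phis (fun j => (lams j - xi) ^ 2) f) x t.
Proof.
  rewrite smooth2_dt_dx by exact h_smooth.
  change (Derive (fun y => dt h y t) x = dx (An n xi u phis lams h) x t + 4 * dx (dx f) x t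
            + dx (source_sum n phis (fun j => (lams j - xi) ^ 2) f) x t).
  rewrite (Derive_ext _ (fun y => An n xi u phis lams h y t + 4 * dx f y t
                        + source_sum n phis (fun j => (lams j - xi) ^ 2) f y t) _ (fun y => dt_h y t)).
  apply is_derive_unique; auto_derive.
  - split; [eexists; apply (is_derive_An n u phis lams Hu Hphis Hphis_schr), h_smooth|].
    split; [apply smooth2_ex_derive_x; auto using f_smooth with smooth|].
    split; [eexists; apply (is_derive_source_sum n u phis lams Hphis Hphis_schr), f_smooth|].
    exact I.
  - rewrite !Derive_dx, !Rmult_1_l; reflexivity.
Qed.

Let omega_phi := fun x t => W f phi x t / (xi - lam).
Let ubar := fun x t => u x t + 2 * dx (dx (fun y s => ln (Rabs (D y s)))) x t.

Lemma darboux_lax_covariance x t :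
  dt phi x t - dt f x t * omega_phi x t / D x t
  + f x t * dt (omega_ff F xi) x t / D x t ^ 2 * omega_phi x t
  - f x t * dt omega_phi x t / D x t
  = An n lam ubar (fun j => darboux f D xi (lams j) (phis j)) lams (darboux f D xi lam phi) x t.
Proof.
  assert (Hf_schr : schrodinger u xi f) by exact (fun y s => proj1 (f_lax y s)).
  assert (Hphi_schr : schrodinger u lam phi) by exact (fun y s => proj1 (Hphi_lax y s)).
  assert (Hxi_lam : xi <> lam) by (intros E; apply Hlam_xi; symmetry; exact E).
  rewrite (An_darboux u f D xi f_smooth Hf_schr is_derive_D HD0) by auto.
  unfold ubar; cbv beta.
  rewrite (dx_darboux_potential u f D Hu f_smooth is_derive_D HD0),
    (dx_dx_log_D f D f_smooth is_derive_D HD0),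
    (dx_darboux u f D xi f_smooth Hf_schr is_derive_D HD0 lam phi) by auto.
  unfold omega_phi; rewrite dt_W_ratio by (exact f_smooth || exact Hphi).
  rewrite dt_omega_ff, dt_dx_h, dt_h, (LaxSol_dt_dx n u phis lams lam phi) by auto.
  rewrite (LaxSol_dt_dx n u phis lams xi f) by (exact f_smooth || exact f_lax).
  rewrite !(dx_An n u phis lams Hu Hphis Hphis_schr)
    by (exact f_smooth || exact h_smooth || exact Hphi).
  rewrite !(dx_source_sum n u phis lams Hphis Hphis_schr)
    by (exact f_smooth || exact h_smooth || exact Hphi).
  rewrite (proj2 (Hphi_lax x t)), (proj2 (f_lax x t)).
  rewrite h_schrodinger, (schrodinger_dx_dx u xi f), (schrodinger_dx_dx u lam phi) by assumption.
  unfold An, source_sum, darboux, W.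
  (* Both sides are affine in the source terms, so it suffices to check the identity
     without sources and the increment brought by each source. *)
  lazymatch goal with
  | |- ?lhs = ?rhs =>
      let a := eval pattern n in lhs in
      let b := eval pattern n in rhs in
      lazymatch a with ?a' _ => lazymatch b with ?b' _ =>
        apply (eq_by_increments a' b' (fun k => xi <> lams k /\ lam <> lams k)) end end
  end.
  - cbn [sumR]; field; repeat split; first [exact (HD0 x t) | lra].
  - intros k [Hk1 Hk2]; cbn [sumR]; field; repeat split; first [exact (HD0 x t) | lra].
  - auto.
Qed.

End KdVSources.

Theorem lemma2p1 (n : nat) (u : R -> R -> R) (phis : nat -> R -> R -> R)
  (lams : nat -> R) (F : R -> R -> R -> R) (xi lam : R) (phi : R -> R -> R)
  (e : R -> R) :
  (1 <= n)%nat ->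
  (forall i j, (i < n)%nat -> (j < n)%nat -> i <> j -> lams i <> lams j) ->
  smooth2 u ->
  (forall j, (j < n)%nat -> smooth2 (phis j)) ->
  (forall x t, dt u x t + 6 * u x t * dx u x t + dx (dx (dx u)) x t
                + 4 * sumR n (fun j => phis j x t * dx (phis j) x t) = 0) ->
  (forall j, (j < n)%nat -> forall x t,
      dx (dx (phis j)) x t + (lams j + u x t) * phis j x t = 0) ->
  (forall j, (j < n)%nat -> xi <> lams j) ->
  (exists delta, 0 < delta /\ smooth3_near F xi delta /\
     forall eta, Rabs (eta - xi) < delta ->
       LaxSol n u phis lams eta (fun x t => F x t eta)) ->
  lam <> xi ->
  (forall j, (j < n)%nat -> lam <> lams j) ->
  smooth2 phi ->
  LaxSol n u phis lams lam phi ->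
  (forall t, ex_derive e t) ->
  (forall x t, e t + omega_ff F xi x t <> 0) ->
  let f := fun x t => F x t xi in
  let D := fun x t => e t + omega_ff F xi x t in
  let wfp := fun x t => W f phi x t / (xi - lam) in
  let phibar := fun x t => phi x t - f x t * wfp x t / D x t in
  let ubar := fun x t => u x t + 2 * dx (dx (fun y s => ln (Rabs (D y s)))) x t in
  let phisbar := fun j x t =>
    phis j x t - f x t * (W f (phis j) x t / (xi - lams j)) / D x t in
  forall x t,
    dt phi x t - dt f x t * wfp x t / D x t
    + f x t * dt (omega_ff F xi) x t / (D x t) ^ 2 * wfp x t
    - f x t * dt wfp x t / D x t
    = An n lam ubar phisbar lams phibar x t.
Proof.
  intros _ _ Hu Hphis _ Hphis_schr Hxi [delta [Hdelta [HF HF_lax]]] Hlam_xi Hlam Hphi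
    Hphi_lax _ HD0 f D wfp phibar ubar phisbar x t.
  exact (darboux_lax_covariance n u phis lams F xi delta lam phi e Hu Hphis Hphis_schr Hxi
           Hdelta HF HF_lax Hlam_xi Hlam Hphi Hphi_lax HD0 x t).
Qed.
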